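(* In the setting of the Weighted Graph Sampler below, let $G\in\mathcal{G}$, let $w$ be a vertex sequence returned by the kernel selection procedure from $G$, $z=\{w,w^r\}$, and let $[\Delta_{low},\Delta_{up}]$ be the admissible range of $\Delta$. If $\Delta_{up}-\Delta_{low}\ge 2$, then the probability $\mathbb{V}_{G_{\Delta^*}}(z)$ that kernel selection from $G_{\Delta^*}$ returns $w$ or $w^r$ is the same for all integers $\Delta^*$ with $\Delta_{low}<\Delta^*<\Delta_{up}$. Consequently the conditional law of $\Delta$ is $$\frac{1}{d}\Big(\mathbb{V}_{G_{\Delta_{low}}}(z)\delta_{\Delta_{low}}+\mathbb{V}_{G_{\Delta_{up}}}(z)\delta_{\Delta_{up}}+\alpha_{int}\sum_{\Delta_{low}<\tilde\Delta<\Delta_{up}}\delta_{\tilde\Delta}\Big),$$ where $\alpha_{int}$ is this common value and $d=\mathbb{V}_{G_{\Delta_{low}}}(z)+\mathbb{V}_{G_{\Delta_{up}}}(z)+\alpha_{int}\max(\Delta_{up}-\Delta_{low}-1,0)$.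
   Context: Setting (weighted graphs). $V$ finite; an integer-weighted graph is $G=(V,E,c)$ with $c:V\times V\to\mathbb{N}_0$, $E(G)=\{uv:c(uv)>0\}$; graphs all directed or all undirected. $G_0$ given, $\mathcal{F}$ a given set of possible edges; $\mathcal{G}$ is the set of weighted graphs with the same (in- and out-, if directed) strength sequence as $G_0$ and $c_G(uv)=c_{G_0}(uv)$ for $uv\in\mathcal{F}$. $N_G(u)=\{v: vu\in E(G), vu\notin\mathcal{F}\}$, $M_G(u)=\{v: uv\notin\mathcal{F}\}$. Kernel selection from $G$: $W_{-1}=*$; $W_0\sim$ Uniform$\{v:N_G(v)\neq\emptyset\}$; $n=0$; repeat: (1) if $N_G(W_n)\setminus\{W_{n-1}\}=\emptyset$ return ''identity'', else $W_{n+1}\sim$ Uniform of that set; (2) if $W_0\in M_G(W_{n+1})\setminus\{W_n\}$ return $W_0W_1\cdots W_{n+1}W_0$; else if $M_G(W_{n+1})\setminus\{W_n\}=\emptyset$ return ''identity''; else $W_{n+2}\sim$ Uniform of that set, $n\leftarrow n+2$. For $w=w_0\cdots w_kw_0$, $n_w(uv)$ is the number of occurrences of $uv$ among $w_1w_0,w_3w_2,\dots,w_kw_{k-1}$ minus the number among $w_1w_2,\dots,w_kw_0$. $G_\Delta$ is the graph with weights $c_G(uv)+n_w(uv)\Delta$; the admissible range $[\Delta_{low},\Delta_{up}]$ is the set of integers $\Delta$ with $G_\Delta\in\mathcal{G}$. $\mathbb{V}_{G'}(z)$ is the probability that kernel selection from $G'$ returns $w$ or $w^r$. The Weighted Graph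 Sampler samples $\Delta$ in the admissible range with probability proportional to $\mathbb{V}_{G_\Delta}(z)$. *)

From HB Require Import structures.
From mathcomp Require Import all_boot all_order all_algebra.
Set Implicit Arguments. Unset Strict Implicit. Unset Printing Implicit Defensive.
Import Order.TTheory GRing.Theory Num.Theory.
Local Open Scope ring_scope.

(* An integer-weighted graph on the finite vertex type V: c : V -> V -> nat.
   [directed] selects directed/undirected mode; in undirected mode weights are
   symmetric and an ordered pair (u,v) stands for the unordered edge uv. *)
Section WGS.
Variable V : finType.
Variable directed : bool.
Variable G0 : V -> V -> nat.
Variable F : rel V.

Definition ind (b : bool) : rat := if b then 1 else 0.

Definition outstr (G : V -> V -> nat) (u : V) : nat := (\sum_(v : V) G u v)%N.
Definition instr (G : V -> V -> nat) (u : V) : nat := (\sum_(v : V) G v u)%N.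

Definition inG (G : V -> V -> nat) : bool :=
  [&& [forall u, outstr G u == outstr G0 u],
      [forall u, instr G u == instr G0 u],
      [forall u, forall v, F u v ==> (G u v == G0 u v)] &
      (directed || [forall u, forall v, G u v == G v u])].

Definition Nb (G : V -> V -> nat) (u : V) : {set V} :=
  [set v | (0 < G v u)%N && ~~ F v u].
Definition Mb (u : V) : {set V} := [set v | ~~ F u v].
Definition starts (G : V -> V -> nat) : {set V} := [set v | Nb G v != set0].

Definition optexcl (A : {set V}) (o : option V) : {set V} :=
  if o is Some x then A :\ x else A.

(* Probability that kernel selection, being at W_n = cur with W_{n-1} = prev
   (n even), continues exactly along [rest] = W_{n+1} ... W_k and then
   returns W_0 ... W_k W_0, where W_0 = w0. *)
Fixpoint kstep (G : V -> V -> nat) (w0 : V) (prev : option V) (cur : V)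
    (rest : seq V) : rat :=
  match rest with
  | [::] => 0
  | x :: rest' =>
      let A := optexcl (Nb G cur) prev in
      ind (x \in A) / #|A|%:R *
      (let B := Mb x :\ cur in
       match rest' with
       | [::] => ind (w0 \in B)
       | y :: rest'' =>
           ind (w0 \notin B) * (ind (y \in B) / #|B|%:R) *
           kstep G w0 (Some x) y rest''
       end)
  end.

(* Probability that kernel selection from G returns the closed sequence
   w_0 w_1 ... w_k w_0, represented by w = [:: w_0; ...; w_k]. *)
Definition kprob (G : V -> V -> nat) (w : seq V) : rat :=
  match w with
  | [::] => 0
  | w0 :: rest => ind (w0 \in starts G) / #|starts G|%:R * kstep G w0 None w0 rest
  end.

Definition wrev (w : seq V) : seq V :=
  match w with [::] => [::] | w0 :: r => w0 :: rev r end.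

Definition Vz (G : V -> V -> nat) (w : seq V) : rat :=
  kprob G w + (if wrev w != w then kprob G (wrev w) else 0).

Definition edge_is (a b u v : V) : bool :=
  if directed then (a == u) && (b == v)
  else ((a == u) && (b == v)) || ((a == v) && (b == u)).

(* n_w(uv): occurrences among w_1w_0, w_3w_2, ..., w_kw_{k-1} minus
   occurrences among w_1w_2, w_3w_4, ..., w_kw_0 *)
Definition nw (w : seq V) (u v : V) : int :=
  let w0 := head u w in
  let cl := rcons w w0 in
  let x := fun j => nth w0 cl j in
  ((\sum_(j < size w | odd j) edge_is (x j) (x j.-1) u v)%N)%:Z
  - ((\sum_(j < size w | odd j) edge_is (x j) (x j.+1) u v)%N)%:Z.

(* G_Delta (weights c_G(uv) + n_w(uv) Delta; read as nat via absz, which is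
   exact whenever these weights are nonnegative, i.e. for admissible Delta) *)
Definition GDz (G : V -> V -> nat) (w : seq V) (D : int) (u v : V) : int :=
  (G u v)%:Z + nw w u v * D.
Definition GD (G : V -> V -> nat) (w : seq V) (D : int) : V -> V -> nat :=
  fun u v => absz (GDz G w D u v).

Definition admissible (G : V -> V -> nat) (w : seq V) (D : int) : bool :=
  [forall u, forall v, 0 <= GDz G w D u v] && inG (GD G w D).

Definition sprob (G : V -> V -> nat) (w : seq V) (low up : int) (D : int) : rat :=
  if (low <= D) && (D <= up) then
    Vz (GD G w D) w / (\sum_(i < (absz (up - low)).+1) Vz (GD G w (low + i%:Z)) w)
  else 0.

End WGS.

(** The kernel-selection probability from a graph depends only on the sets
    N_G(u), i.e. on which non-fixed edges carry positive weight.  Along the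
    line G_Delta every weight is affine in Delta and nonnegative at both ends
    of the admissible range, so it vanishes at an interior Delta only if it
    vanishes identically.  Hence all interior G_Delta have the same edge set,
    the same N_G(u), and the same value V_{G_Delta}(z); normalising the
    resulting three-level weight function gives the law of Delta. *)

From HB Require Import structures.
From mathcomp Require Import all_boot all_order all_algebra.
From mathcomp Require Import zify.
From Stdlib Require Import FunctionalExtensionality.
Set Implicit Arguments. Unset Strict Implicit.
Import Order.TTheory GRing.Theory Num.Theory.
Local Open Scope ring_scope.

Section KernelSelection.
Variables (V : finType) (F : rel V) (G1 G2 : V -> V -> nat).
Hypothesis eq_Nb : forall u, Nb F G1 u = Nb F G2 u.

Lemma eq_kstep_Nb w0 prev cur rest :
  kstep F G1 w0 prev cur rest = kstep F G2 w0 prev cur rest.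
Proof.
move: {2}(size rest) (leqnn (size rest)) => n.
elim: n prev cur rest => [|n IH] prev cur [|x [|y r]] //= Hs; rewrite eq_Nb //.
by rewrite IH // ltnW.
Qed.

Lemma eq_kprob_Nb w : kprob F G1 w = kprob F G2 w.
Proof.
have Hstarts : starts F G1 = starts F G2 by apply/setP=> v; rewrite !inE eq_Nb.
by case: w => [|w0 r] //=; rewrite Hstarts eq_kstep_Nb.
Qed.

Lemma eq_Vz_Nb w : Vz F G1 w = Vz F G2 w.
Proof. by rewrite /Vz !eq_kprob_Nb. Qed.

End KernelSelection.

Lemma affine_neq0_interior {a b l u D1 D2 : int} :
  0 <= a + b * l -> 0 <= a + b * u -> l < D1 < u -> l < D2 < u ->
  (a + b * D1 != 0) = (a + b * D2 != 0).
Proof.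
move=> Hl Hu /andP[H1l H1u] /andP[H2l H2u].
have [->|Hb] := eqVneq b 0; first by rewrite !mul0r.
by apply/idP/idP => _; apply/negP => /eqP; nia.
Qed.

Section WeightLine.
Variables (V : finType) (directed : bool) (G0 : V -> V -> nat) (F : rel V).
Variables (G : V -> V -> nat) (w : seq V).

Lemma GD0 : GD directed G w 0 = G.
Proof.
by apply: functional_extensionality => u; apply: functional_extensionality => v;
   rewrite /GD /GDz mulr0 addr0.
Qed.

Lemma admissible0 : inG directed G0 F G -> admissible directed G0 F G w 0.
Proof.
move=> HG; rewrite /admissible GD0 HG andbT.
by apply/forallP=> u; apply/forallP=> v; rewrite /GDz mulr0 addr0.
Qed.

Lemma Nb_GD_interior (low up D1 D2 : int) :
  admissible directed G0 F G w low -> admissible directed G0 F G w up ->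
  low < D1 < up -> low < D2 < up ->
  forall u, Nb F (GD directed G w D1) u = Nb F (GD directed G w D2) u.
Proof.
move=> /andP[/forallP Hlow _] /andP[/forallP Hup _] HD1 HD2 u.
apply/setP=> v; rewrite !inE /GD !absz_gt0.
by rewrite (affine_neq0_interior (forallP (Hlow v) u) (forallP (Hup v) u) HD1 HD2).
Qed.

End WeightLine.

Section ThreeLevelLaw.
Variables (f : int -> rat) (alpha : rat).

Lemma sum_interval_interior_const (low : int) (n : nat) :
  (forall D, low < D < low + n.+1%:Z -> f D = alpha) ->
  \sum_(i < n.+2) f (low + i%:Z) = f low + f (low + n.+1%:Z) + alpha *+ n.
Proof.
move=> f_int; rewrite big_ord_recr big_ord_recl /= addr0 addrAC.
congr (_ + _); rewrite (eq_bigr (fun _ => alpha)) ?sumr_const ?card_ord // => i _.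
apply: f_int; have := ltn_ord i; rewrite /bump /=; lia.
Qed.

Lemma interval_restrict_three_levels (low up D : int) :
  low < up -> (forall D, low < D < up -> f D = alpha) ->
  (if low <= D <= up then f D else 0) =
    f low * ind (D == low) + f up * ind (D == up) + alpha * ind (low < D < up).
Proof.
move=> lt_low_up f_int; rewrite /ind.
have [->|ne_low] := eqVneq D low.
  by rewrite lexx (ltW lt_low_up) ltxx lt_eqF //= mulr1 !mulr0 !addr0.
have [->|ne_up] := eqVneq D up.
  by rewrite lexx (ltW lt_low_up) ltxx andbF /= mulr1 !mulr0 add0r addr0.
rewrite !mulr0 !add0r; case: ifP => [/andP[le_low le_up]|outside].
  have interior : low < D < up by rewrite lt_def ne_low le_low lt_neqAle ne_up le_up.
  by rewrite interior mulr1 f_int.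
suff -> : (low < D < up) = false by rewrite mulr0.
by apply: contraFF outside => /andP[/ltW -> /ltW ->].
Qed.

Lemma normalized_three_level_law (low up D : int) :
  low <= up -> (forall D, low < D < up -> f D = alpha) ->
  (if low <= D <= up
   then f D / (\sum_(i < (absz (up - low)).+1) f (low + i%:Z)) else 0) =
  (f low + f up + alpha * (Num.max (up - low - 1) 0)%:~R)^-1 *
    (f low * ind (D == low) + f up * ind (D == up) + alpha * ind (low < D < up)).
Proof.
move=> le_low_up f_int.
(* For [low = up] the single point is counted twice, in [d] and in the
   numerator alike, so the factors of two cancel. *)
have [n def_up] : exists n : nat, up = low + n%:Z.
  by exists (absz (up - low)); rewrite gez0_abs ?subr_ge0 // addrCA subrr addr0.
rewrite def_up addrC addKr; case: n def_up => [|n] def_up.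
  rewrite addr0 big_ord1 addr0 (_ : Num.max (0 - 1) 0 = 0) // mulr0 addr0 /ind.
  have [->|ne_low] := eqVneq D low; last first.
    by rewrite -eq_le eq_sym (negbTE ne_low) lt_asym !(mulr0, addr0).
  rewrite lexx ltxx /= !mulr1 mulr0 addr0.
  have [->|nz] := eqVneq (f low) 0; first by rewrite mul0r.
  by rewrite divff // mulVf // -mulr2n mulrn_eq0 negb_or nz.
rewrite -def_up sum_interval_interior_const -def_up //.
rewrite (_ : Num.max _ 0 = n%:Z); last by rewrite max_l; lia.
rewrite -mulr_natr mulrC -interval_restrict_three_levels //; last first.
  by rewrite def_up ltrDl.
by case: ifP; rewrite ?mulr0.
Qed.

End ThreeLevelLaw.

Theorem mainTheorem8 (V : finType) (directed : bool) (G0 : V -> V -> nat) (F : rel V)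
  (Hund : ~~ directed ->
     (forall u v, G0 u v = G0 v u) /\ (forall u v, F u v = F v u))
  (G : V -> V -> nat) (HG : inG directed G0 F G)
  (w : seq V) (Hw : 0 < kprob F G w)
  (low up : int)
  (Hrange : forall D : int, admissible directed G0 F G w D <-> (low <= D <= up)) :
  (2%:Z <= up - low ->
     forall D1 D2 : int, low < D1 < up -> low < D2 < up ->
       Vz F (GD directed G w D1) w = Vz F (GD directed G w D2) w)
  /\
  (forall alpha : rat,
     (forall Ds : int, low < Ds < up -> Vz F (GD directed G w Ds) w = alpha) ->
     forall Dt : int,
       let Vlow := Vz F (GD directed G w low) w in
       let Vup := Vz F (GD directed G w up) w in
       let d := Vlow + Vup + alpha * (Num.max (up - low - 1) 0)%:~R in
       sprob directed F G w low up Dt =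
         d^-1 * (Vlow * ind (Dt == low) + Vup * ind (Dt == up)
                 + alpha * ind (low < Dt < up))).
Proof.
have /Hrange/andP[Hl0 H0u] := admissible0 w HG.
have Hlu : low <= up := le_trans Hl0 H0u.
have Hlow : admissible directed G0 F G w low by apply/Hrange; rewrite lexx Hlu.
have Hup : admissible directed G0 F G w up by apply/Hrange; rewrite lexx Hlu.
split.
  by move=> _ D1 D2 HD1 HD2; apply/eq_Vz_Nb/(Nb_GD_interior Hlow Hup HD1 HD2).
move=> alpha f_int Dt Vlow Vup d; rewrite /sprob /d /Vlow /Vup.
exact: (normalized_three_level_law (f := fun D => Vz F (GD directed G w D) w) Dt Hlu f_int).
Qed.
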